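(* Let $k\ge1$ and let $\mathcal{C}$ be a set of admissible $(k+1)$-words. Let $W_k\langle\mathcal{C}\rangle$ be the smallest $T_k$-invariant subspace of $V_k$ containing $\psi_k(V_1)$ and the vectors $[\eta w]$ for $w\in\mathcal{C}$. Then $T_k\langle\mathcal{C}\rangle$ maps $W_k\langle\mathcal{C}\rangle$ into itself, and the induced map on $V_k/W_k\langle\mathcal{C}\rangle$ is nilpotent.
   Context: Let $\mathcal{A}$ be a finite alphabet of $r$ symbols and $T=(T_{x,y})$ an $r\times r$ matrix with entries in $\{0,1\}$. An admissible $k$-word is a string $a_1\cdots a_k$ of symbols with $T_{a_{i+1},a_i}=1$ for $1\le i\le k-1$. $V_k$ is the complex vector space with basis $\{[w]\}$ indexed by admissible $k$-words. $\psi_k:V_1\to V_k$ is linear with $\psi_k([a])$ the sum of $[w]$ over all admissible $k$-words beginning with $a$. $T_k:V_k\to V_k$ is linear with $T_k([a_1\cdots a_k])=\sum[a_2\cdots a_kx]$, summed over symbols $x$ with $a_2\cdots a_kx$ admissible. For a word $w$, $\beta w$ and $\eta w$ denote the words obtained by deleting the last and the first symbol, respectively. For an admissible $(k+1)$-word $w$, $E_w:V_k\to V_k$ is the linear map with $E_w[\beta w]=[\eta w]$ and $E_w[u]=0$ for every other admissible $k$-word $u$. For a set $\mathcal{C}$ of admissible $(k+1)$-words, $T_k\langle\mathcal{C}\rangle=T_k-\sum_{w\in\mathcal{C}}E_w$. *)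

From HB Require Import structures.
From mathcomp Require Import all_boot all_order all_algebra.
From mathcomp Require Import reals Rstruct complex.
Set Implicit Arguments. Unset Strict Implicit. Unset Printing Implicit Defensive.
Import GRing.Theory.
Local Open Scope ring_scope.

Definition C : fieldType := (Rdefinitions.R)[i].

Section Words.
(* Alphabet 'I_r (r symbols) and 0/1 transition matrix T (entries in nat). *)
Variables (r : nat) (T : 'M[nat]_r).

Definition admissible (s : seq 'I_r) : bool :=
  sorted (fun a b : 'I_r => T b a == 1%N) s.

Definition Adm (k : nat) : finType := {w : k.-tuple 'I_r | admissible w}.

Definition word (k : nat) (u : Adm k) : seq 'I_r := val (val u).

Definition V (k : nat) : vectType C := {ffun Adm k -> C^o}.

(* [s] : the basis vector of the word s (it is the basis vector [u] when
   s is the admissible k-word u). *)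
Definition bvec (k : nat) (s : seq 'I_r) : V k :=
  [ffun u : Adm k => ((word u == s) : nat)%:R].

Definition beta (s : seq 'I_r) : seq 'I_r := take (size s).-1 s.
Definition eta (s : seq 'I_r) : seq 'I_r := behead s.

Definition psi_basis (k : nat) (a : 'I_r) : V k :=
  \sum_(u : Adm k | ohead (word u) == Some a) bvec k (word u).

Definition Tk_basis (k : nat) (u : Adm k) : V k :=
  \sum_(x : 'I_r | admissible (rcons (eta (word u)) x))
     bvec k (rcons (eta (word u)) x).

Definition Tk (k : nat) (v : V k) : V k :=
  \sum_(u : Adm k) v u *: Tk_basis u.

Definition Ew (k : nat) (w : Adm k.+1) (v : V k) : V k :=
  \sum_(u : Adm k | word u == beta (word w)) v u *: bvec k (eta (word w)).

Definition TkC (k : nat) (Cs : {set Adm k.+1}) (v : V k) : V k :=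
  Tk v - \sum_(w in Cs) Ew w v.

Definition Tk_invariant (k : nat) (U : {vspace V k}) : Prop :=
  forall v, v \in U -> Tk v \in U.

Definition contains_gens (k : nat) (Cs : {set Adm k.+1}) (U : {vspace V k})
  : Prop :=
  (forall a : 'I_r, psi_basis k a \in U) /\
  (forall w : Adm k.+1, w \in Cs -> bvec k (eta (word w)) \in U).

Definition is_Wk (k : nat) (Cs : {set Adm k.+1}) (W : {vspace V k}) : Prop :=
  [/\ Tk_invariant W, contains_gens Cs W &
      forall U : {vspace V k}, Tk_invariant U -> contains_gens Cs U ->
        (W <= U)%VS].

End Words.

From Pilot Require Import Defs.
From HB Require Import structures.
From mathcomp Require Import all_boot all_order all_algebra.
From mathcomp Require Import reals Rstruct complex.
Set Implicit Arguments. Unset Strict Implicit. Unset Printing Implicit Defensive.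
Local Open Scope ring_scope.
Import GRing.Theory.

(* T_k<C> differs from T_k by a map with values in W, so its iterates agree
   with those of T_k modulo the T_k-invariant subspace W.  Reading off
   coordinates, (T_k^j v)[t] is the sum of v[u] over the words u whose last
   k - j letters are the first k - j letters of t; for j = k - 1 this only
   depends on the first letter of t, i.e. T_k^(k-1) v lies in psi_k(V_1),
   which is contained in W. *)

Section Perturbation.
Variables (K : fieldType) (vT : vectType K) (U : {vspace vT}) (f g : vT -> vT).
Hypothesis fB : {morph f : x y / x - y}.
Hypothesis f_stable : forall v, v \in U -> f v \in U.
Hypothesis gBf_mem : forall v, g v - f v \in U.

Lemma perturb_stable v : v \in U -> g v \in U.
Proof. by move=> vU; rewrite -(subrK (f v) (g v)) memvD ?f_stable. Qed.

Lemma iter_perturbB_mem m v : iter m g v - iter m f v \in U.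
Proof.
elim: m => [|m IHm]; first by rewrite subrr mem0v.
rewrite !iterS -(subrK (f (iter m g v)) (g _)) -addrA -fB.
by rewrite memvD ?f_stable.
Qed.

End Perturbation.

Lemma drop_eq_cons (A : eqType) (s w : seq A) (a : A) j : (j < size s)%N ->
  (drop j s == a :: w) = (nth a s j == a) && (drop j.+1 s == w).
Proof. by move=> js; rewrite (drop_nth a js) eqseq_cons. Qed.

Lemma sorted_cons_take (A : Type) (e : rel A) (a : A) (s : seq A) m n :
    (0 < m)%N -> (0 < n)%N -> sorted e s -> sorted e (a :: take m s) ->
  sorted e (a :: take n s).
Proof.
case: s m n => [|b s] [|m] [|n] // _ _ s_sorted /andP[eab _] /=.
by rewrite eab -[path _ _ _]/(sorted e (take n.+1 (b :: s))) take_sorted.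
Qed.

Section Coordinates.
Variables (r : nat) (T : 'M[nat]_r) (k : nat).
Hypothesis k_gt0 : (0 < k)%N.

Lemma beta_rcons (s : seq 'I_r) x : beta (rcons s x) = s.
Proof. by rewrite /beta size_rcons -cats1 take_size_cat. Qed.

Lemma size_word (u : Adm T k) : size (word u) = k.
Proof. exact: size_tuple. Qed.

Lemma admissible_word (u : Adm T k) : admissible T (word u).
Proof. exact: valP u. Qed.

Lemma word_eq (u t : Adm T k) : (word u == word t) = (u == t).
Proof. by rewrite /word !val_eqE. Qed.

Lemma word_cons (u : Adm T k) : exists a s, word u = a :: s.
Proof.
by move: (size_word u) k_gt0; case: (word u) => [<- //|a s _ _]; exists a, s.
Qed.

Lemma bvec_wordE (u t : Adm T k) : bvec T k (word u) t = (t == u)%:R.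
Proof. by rewrite ffunE word_eq. Qed.

Lemma sum_word_eq (w : seq 'I_r) (x : C) :
  \sum_(s : Adm T k | word s == w) x =
    if (size w == k) && admissible T w then x else 0.
Proof.
case: ifP => [/andP[sw aw] | wNadm].
  pose s0 : Adm T k := exist _ (Tuple sw) aw.
  by rewrite (eq_bigl (pred1 s0)) ?big_pred1_eq // => s; rewrite /= -word_eq.
apply: big1 => s /eqP ws; move: wNadm.
by rewrite -ws size_word admissible_word eqxx.
Qed.

Lemma psi_basisE a (t : Adm T k) :
  psi_basis T k a t = (ohead (word t) == Some a)%:R.
Proof.
rewrite /psi_basis sum_ffunE big_mkcond (bigD1 t) //= big1 ?addr0 => [|u ut];
  rewrite bvec_wordE.
  by rewrite eqxx; case: ifP.
by rewrite [t == u]eq_sym (negbTE ut) if_same.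
Qed.

Lemma Tk_basisE (s t : Adm T k) :
  Tk_basis s t = (Defs.eta (word s) == beta (word t))%:R.
Proof.
have [t' [y t_rcons]] : exists t' y, word t = rcons t' y.
  by have [a [w ->]] := word_cons t; exists (belast a w), (last a w);
    rewrite lastI.
have adm_t : admissible T (rcons t' y) by rewrite -t_rcons admissible_word.
rewrite /Tk_basis sum_ffunE t_rcons beta_rcons.
under eq_bigr => x _ do rewrite ffunE t_rcons eqseq_rcons.
case: eqVneq => [<- | _]; last by rewrite big1.
rewrite (bigD1 y) //= eqxx big1 ?addr0 // => x /andP[_ /negbTE].
by rewrite eq_sym => ->.
Qed.

Lemma TkE (v : V T k) t :
  Tk v t = \sum_(s | Defs.eta (word s) == beta (word t)) v s.
Proof.
rewrite /Tk sum_ffunE [RHS]big_mkcond; apply: eq_bigr => s _.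
by rewrite ffunE Tk_basisE; case: eqP => _; [exact: mulr1 | exact: mulr0].
Qed.

Lemma beta_word (t : Adm T k) : beta (word t) = take k.-1 (word t).
Proof. by rewrite /beta size_word. Qed.

Lemma shift_condE j a (s t u : Adm T k) : (j.+1 < k)%N ->
  (Defs.eta (word s) == beta (word t)) && (drop j (word u) == take (k - j) (word s))
  = (word s == nth a (word u) j :: beta (word t))
    && (drop j.+1 (word u) == take (k - j.+1) (word t)).
Proof.
move=> jk; have jk' := ltnW jk; have [b [s' ->]] := word_cons s.
rewrite -(subnSK jk') /= eqseq_cons drop_eq_cons ?size_word //.
case: (eqVneq s' (beta (word t))) => [-> | _]; last by rewrite !andbF.
rewrite beta_word take_takel; last by rewrite -subn1 leq_sub2l.
by rewrite [nth b _ _](set_nth_default a) ?size_word // andbT eq_sym.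
Qed.

Lemma sum_shift j (t u : Adm T k) (x : C) : (j.+1 < k)%N ->
  \sum_(s : Adm T k | (Defs.eta (word s) == beta (word t))
            && (drop j (word u) == take (k - j) (word s))) x
  = if drop j.+1 (word u) == take (k - j.+1) (word t) then x else 0.
Proof.
move=> jk; have [a _] := word_cons u.
under eq_bigl do rewrite (@shift_condE j a _ t u jk).
case: ifP => [ut | _]; last by rewrite big1 // => s; rewrite andbF.
under eq_bigl do rewrite andbT.
rewrite sum_word_eq /= beta_word size_takel ?size_word ?leq_pred //.
rewrite prednK ?(leq_trans _ jk) // eqxx /=.
have := drop_sorted j (admissible_word u).
rewrite (drop_nth a) ?size_word ?(ltnW jk) // (eqP ut) => adm_shift.
case: ifP => // /negP[].
apply: (sorted_cons_take (m := k - j.+1) _ _ _ adm_shift).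
- by rewrite subn_gt0.
- by rewrite -ltnS prednK ?(leq_trans _ jk).
- exact: admissible_word.
Qed.

Lemma iter_TkE j (v : V T k) t : (j < k)%N ->
  iter j (@Tk _ T k) v t =
    \sum_(u : Adm T k | drop j (word u) == take (k - j) (word t)) v u.
Proof.
elim: j t => [t _ | j IHj t jk].
  rewrite subn0 take_oversize ?size_word // (eq_bigl (pred1 t)) ?big_pred1_eq //.
  by move=> u; rewrite drop0 word_eq.
rewrite iterS TkE.
under eq_bigr => s _ do rewrite (IHj s (ltnW jk)).
rewrite (exchange_big_dep predT) //= [RHS]big_mkcond.
by apply: eq_bigr => u _; rewrite sum_shift.
Qed.

Lemma iter_Tk_predE (v : V T k) :
  iter k.-1 (@Tk _ T k) v =
    \sum_a (\sum_(u : Adm T k | drop k.-1 (word u) == [:: a]) v u)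
             *: psi_basis T k a.
Proof.
apply/ffunP => t; rewrite iter_TkE ?prednK // sum_ffunE.
have -> : (k - k.-1 = 1)%N by rewrite -subn1 subKn.
have [b [t' wt]] := word_cons t.
rewrite (bigD1 b) //= [X in _ + X]big1 ?addr0 => [|a ab];
  rewrite ffunE psi_basisE wt /=.
  by rewrite eqxx take0; exact: (esym (mulr1 _)).
by case: eqP => [[ba]|_]; [rewrite ba eqxx in ab | exact: mulr0].
Qed.

Lemma TkB : {morph @Tk _ T k : x y / x - y}.
Proof.
by move=> x y; rewrite /Tk -sumrB; apply: eq_bigr => u _; rewrite !ffunE scalerBl.
Qed.

Lemma EwE (w : Adm T k.+1) (v : V T k) :
  Ew w v = (\sum_(u : Adm T k | word u == beta (word w)) v u)
             *: bvec T k (Defs.eta (word w)).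
Proof. by rewrite /Ew scaler_suml. Qed.

End Coordinates.

Theorem lemma1p4 (r : nat) (T : 'M[nat]_r)
    (hT : forall x y : 'I_r, (T x y <= 1)%N)
    (k : nat) (hk : (1 <= k)%N) (Cs : {set Adm T k.+1})
    (W : {vspace V T k}) (hW : is_Wk Cs W) :
  (forall v, v \in W -> TkC Cs v \in W) /\
  (exists m : nat, forall v : V T k, iter m (TkC Cs) v \in W).
Proof.
case: hW => Tk_stable [psi_in eta_in] _.
have TkCBTk_mem v : TkC Cs v - Tk v \in W.
  rewrite /TkC addrAC subrr add0r memvN; apply: memv_suml => w wCs.
  by rewrite EwE memvZ ?eta_in.
split; first exact: perturb_stable Tk_stable TkCBTk_mem.
exists k.-1 => v.
rewrite -(subrK (iter k.-1 (@Tk _ T k) v) (iter k.-1 (TkC Cs) v)).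
rewrite memvD ?(iter_perturbB_mem (@TkB _ T k) Tk_stable) // iter_Tk_predE //.
by apply: memv_suml => a _; rewrite memvZ.
Qed.
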